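(* Let $n\ge2$, $w\in\widetilde{S}_n^\circ$ with $t$-coordinates $(t_1,\dots,t_{n-1})$, and fix $1\le i\le n-1$. Let $j$ be the largest integer $j\ge1$ with $w(i+1)>w(i+jn)$ if such $j$ exists, and $j=0$ otherwise. Then $t_i$ equals the number of window boundaries between positions $i+1$ and $i+jn$, i.e. the number of integers $r$ with $i+1\le rn< i+jn$ (this is $0$ when $j=0$).
   Context: An affine permutation of size $n$ is a bijection $w:\mathbb{Z}\to\mathbb{Z}$ with $w(i+n)=w(i)+n$ for all $i$ and $w(1)+\cdots+w(n)=\binom{n+1}{2}$, base window $[w_1,\dots,w_n]=[w(1),\dots,w(n)]$. $\widetilde{S}_n^\circ$ is the set of such $w$ with $w_1<\cdots<w_n$. For $w\in\widetilde{S}_n^\circ$, an integer is a bead if it equals $w_j-mn$ for some $j$ and integer $m\ge0$, a gap otherwise; the gap vector $\dot g(w)=(g_1,\dots,g_{n-1})$ has $g_i$ = number of gaps strictly between $w_i$ and $w_{i+1}$. $\mathsf{BIAS}_n$ is the set of $w\in\widetilde{S}_n^\circ$ with all $w_{i+1}-w_i\in\{1,\dots,n-1\}$; the bias of $w\in\widetilde{S}_n^\circ$ is the unique $b\in\mathsf{BIAS}_n$ with $b_{i+1}-b_i\equiv w_{i+1}-w_i\pmod n$ for all $i$. The $t$-coordinates of $w$ are the unique $t\in\mathbb{Z}_{\ge0}^{n-1}$ with $\dot g(w)=(t_1,2t_2,\dots,(n-1)t_{n-1})+\dot g(b)$, $b$ the bias of $w$ (this $t$ exists and is unique). Window boundaries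 lie between positions $rn$ and $rn+1$ for $r\in\mathbb{Z}$. *)

From HB Require Import structures.
From mathcomp Require Import all_boot all_order all_algebra.
Set Implicit Arguments. Unset Strict Implicit. Unset Printing Implicit Defensive.
Import Order.TTheory GRing.Theory Num.Theory.
Local Open Scope ring_scope.

Definition affine_perm (n : nat) (w : int -> int) : Prop :=
  bijective w /\
  (forall i : int, w (i + n%:Z) = w i + n%:Z) /\
  \sum_(1 <= k < n.+1) w k%:Z = ('C(n.+1, 2))%:Z.

Definition Sncirc (n : nat) (w : int -> int) : Prop :=
  affine_perm n w /\
  (forall k : nat, (1 <= k)%N -> (k < n)%N -> w k%:Z < w k.+1%:Z).

(* x is a bead of w iff x = w_j - m n for some 1 <= j <= n and integer m >= 0,
   i.e. x <= w_j and n divides w_j - x. *)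
Definition beadb (n : nat) (w : int -> int) (x : int) : bool :=
  has (fun j : nat => (x <= w j%:Z) && (n%:Z %| (w j%:Z - x))%Z) (iota 1 n).

Definition gapcount (n : nat) (w : int -> int) (k : nat) : nat :=
  count (fun x => ~~ beadb n w x)
    [seq w k%:Z + m%:Z | m <- iota 1 (absz (w k.+1%:Z - w k%:Z)).-1].

Definition BIAS (n : nat) (b : int -> int) : Prop :=
  Sncirc n b /\
  (forall k : nat, (1 <= k)%N -> (k < n)%N ->
     1 <= b k.+1%:Z - b k%:Z <= (n.-1)%:Z).

Definition bias_of (n : nat) (w b : int -> int) : Prop :=
  BIAS n b /\
  (forall k : nat, (1 <= k)%N -> (k < n)%N ->
     (b k.+1%:Z - b k%:Z = w k.+1%:Z - w k%:Z %[mod n%:Z])%Z).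

Definition is_tcoords (n : nat) (w : int -> int) (t : nat -> nat) : Prop :=
  exists b, bias_of n w b /\
    (forall k : nat, (1 <= k)%N -> (k < n)%N ->
       gapcount n w k = (k * t k + gapcount n b k)%N).

Definition is_jmax (n : nat) (w : int -> int) (i j : nat) : Prop :=
  (j = 0%N /\ forall k : nat, (1 <= k)%N -> ~ (w (i + k * n)%N%:Z < w i.+1%:Z))
  \/
  ((1 <= j)%N /\ w (i + j * n)%N%:Z < w i.+1%:Z /\
   forall k : nat, (j < k)%N -> ~ (w (i + k * n)%N%:Z < w i.+1%:Z)).

(* number of integers r with i+1 <= r n < i + j n (such r are positive and
   smaller than i + j n, so we range over r in [0, i + j n)). *)
Definition boundaries (n i j : nat) : nat :=
  count (fun r : nat => (i.+1 <= r * n)%N && (r * n < i + j * n)%N)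
        (iota 0 (i + j * n)).

From mathcomp Require Import all_boot all_order all_algebra zify.
Import Order.TTheory GRing.Theory Num.Theory.
Set Implicit Arguments. Unset Strict Implicit. Unset Printing Implicit Defensive.
Local Open Scope ring_scope.

(* Strictly between w_k and w_{k+1}, an integer is a gap exactly when it is
   congruent mod n to one of w_1, ..., w_k: the residue classes of
   w_{k+1}, ..., w_n only contain beads there.  Hence the gaps are n-periodic
   with k of them per period, and writing w_{k+1} - w_k = q n + d, where
   0 < d < n is the corresponding difference for the bias b (whose window
   has the same residues up to a common shift), g_k(w) = k q + g_k(b), so
   t_k = q.  Then w(k + j n) = w_k + j n < w_{k+1} exactly when j <= q, and q
   is also the number of window boundaries between k + 1 and k + q n. *)

Lemma count_iota_periodic (P : pred nat) (n a : nat) :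
  (forall m, P (m + n)%N = P m) ->
  forall q s : nat,
  count P (iota a (q * n + s)) = (q * count P (iota a n) + count P (iota a s))%N.
Proof.
move=> P_per; elim=> [|q IHq] s; first by rewrite mul0n.
rewrite mulSn -addnA iotaD count_cat [(a + n)%N]addnC iotaDl count_map.
rewrite (eq_count (a2 := P)) => [|m /=]; last by rewrite addnC P_per.
by rewrite IHq mulSn addnA.
Qed.

Lemma count_dvdz_iota (n : nat) (a : int) : (0 < n)%N ->
  count (fun m : nat => (n%:Z %| a - m%:Z)%Z) (iota 1 n) = 1%N.
Proof.
move=> n_gt0.
have n_neq0 : n%:Z != 0 by rewrite eqz_nat -lt0n.
have r_ge0 := modz_ge0 (a - 1) n_neq0.
have r_lt : ((a - 1) %% n%:Z)%Z < n%:Z by rewrite ltz_pmod ?ltz_nat.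
have := divz_eq (a - 1) n%:Z.
set r := ((a - 1) %% n%:Z)%Z; set q := ((a - 1) %/ n%:Z)%Z => a_eq.
rewrite (eq_in_count (a2 := pred1 (absz r).+1)); last first.
  move=> m; rewrite mem_iota => m_bd /=; apply/dvdzP/eqP => [[z a_m] | ->].
    have [z_lt|[z_eq|z_gt]] : z < q \/ z = q \/ q < z by lia.
    - nia.
    - lia.
    - nia.
  by exists q; lia.
by rewrite count_uniq_mem ?iota_uniq // mem_iota; lia.
Qed.

Lemma count_residue_classes (n : nat) (e : nat -> int) (s : seq nat) :
  (0 < n)%N -> uniq s ->
  {in s &, forall c c', (n%:Z %| e c - e c')%Z -> c = c'} ->
  count (fun m : nat => has (fun c => (n%:Z %| e c - m%:Z)%Z) s) (iota 1 n) = size s.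
Proof.
move=> n_gt0; elim: s => [|c s IHs] /=; first by rewrite count_pred0.
move=> /andP[c_notin s_uniq] e_inj.
have := count_predUI (fun m : nat => (n%:Z %| e c - m%:Z)%Z)
  (fun m : nat => has (fun c => (n%:Z %| e c - m%:Z)%Z) s) (iota 1 n).
rewrite count_dvdz_iota // IHs //; last first.
  by move=> x y xs ys; apply: e_inj; rewrite inE ?xs ?ys orbT.
move=> UI; rewrite -[(size s).+1]add1n -UI [X in _ = (_ + X)%N](eq_count (a2 := pred0)).
  by rewrite count_pred0 addn0.
move=> m /=; apply/negbTE/andP => -[ec_m /hasP[c' c's ec'_m]].
have ecc' : (n%:Z %| e c - e c')%Z.
  by have := rpredB ec_m ec'_m; rewrite opprB addrA subrK.
by move: c_notin; rewrite (e_inj c c') ?inE ?eqxx ?c's ?orbT.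
Qed.

Section AffineResidues.

Variables (n : nat) (w : int -> int).
Hypothesis w_bij : bijective w.
Hypothesis w_periodic : forall x : int, w (x + n%:Z) = w x + n%:Z.

Lemma affine_shift (x m : int) : w (x + m * n%:Z) = w x + m * n%:Z.
Proof.
have shift_nat (y : int) (k : nat) : w (y + k%:Z * n%:Z) = w y + k%:Z * n%:Z.
  elim: k => [|k IHk]; first by rewrite mul0r !addr0.
  have -> : y + k.+1%:Z * n%:Z = y + k%:Z * n%:Z + n%:Z by lia.
  by rewrite w_periodic IHk; lia.
case: m => [k|k]; first exact: shift_nat.
have := shift_nat (x + Negz k * n%:Z) k.+1.
have -> : x + Negz k * n%:Z + k.+1%:Z * n%:Z = x by rewrite NegzE; lia.
by move=> ->; rewrite NegzE; lia.
Qed.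

Lemma affine_residue_exists (x : int) : (0 < n)%N ->
  exists2 c : nat, (1 <= c <= n)%N & (n%:Z %| w c%:Z - x)%Z.
Proof.
move=> n_gt0; case: w_bij => g wK gK.
have n_neq0 : n%:Z != 0 by rewrite eqz_nat -lt0n.
have r_ge0 := modz_ge0 (g x - 1) n_neq0.
have r_lt : ((g x - 1) %% n%:Z)%Z < n%:Z by rewrite ltz_pmod ?ltz_nat.
have := divz_eq (g x - 1) n%:Z.
set r := ((g x - 1) %% n%:Z)%Z; set q := ((g x - 1) %/ n%:Z)%Z => gx_eq.
exists (absz r).+1; first lia.
apply/dvdzP; exists (- q).
rewrite -[x in _ - x]gK (_ : g x = (absz r).+1%:Z + q * n%:Z) ?affine_shift; lia.
Qed.

Lemma affine_residue_inj (c c' : nat) : (1 <= c <= n)%N -> (1 <= c' <= n)%N ->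
  (n%:Z %| w c%:Z - w c'%:Z)%Z -> c = c'.
Proof.
move=> c_bd c'_bd /dvdzP[m wcc'].
have : w c%:Z = w (c'%:Z + m * n%:Z) by rewrite affine_shift; lia.
move/(bij_inj w_bij) => cc'.
have [m_neg|[m_eq0|m_pos]] : m < 0 \/ m = 0 \/ 0 < m by lia.
- nia.
- lia.
- nia.
Qed.

End AffineResidues.

Definition in_lower_class (n : nat) (u : int -> int) (k m : nat) : bool :=
  has (fun c : nat => (n%:Z %| u c%:Z - u k%:Z - m%:Z)%Z) (iota 1 k).

Lemma in_lower_class_periodic (n : nat) (u : int -> int) (k m : nat) :
  in_lower_class n u k (m + n) = in_lower_class n u k m.
Proof.
by apply: eq_has => c /=; rewrite PoszD opprD addrA rpredBr ?dvdzz.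
Qed.

Section Window.

Variables (n : nat) (w : int -> int).
Hypothesis w_circ : Sncirc n w.

Lemma window_le (a b : nat) : (1 <= a <= b)%N -> (b <= n)%N -> w a%:Z <= w b%:Z.
Proof.
move=> /andP[a_ge1 ab] bn; have w_incr := w_circ.2.
apply: (@homo_leq_in _ [pred k | 1 <= k <= n]%N (fun k => w k%:Z) <=%R lexx le_trans).
- by move=> i j iD jD k; rewrite !inE in iD jD *; lia.
- by move=> k; rewrite !inE => k_bd k1_bd; apply/ltW/w_incr; lia.
- by rewrite inE; lia.
- by rewrite inE; lia.
- done.
Qed.

Lemma count_in_lower_class (k : nat) : (1 <= k <= n)%N ->
  count (in_lower_class n w k) (iota 1 n) = k.
Proof.
move=> k_bd; have [[w_bij [w_per _]] _] := w_circ.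
rewrite /in_lower_class (@count_residue_classes n (fun c => w c%:Z - w k%:Z) (iota 1 k)).
- exact: size_iota.
- lia.
- exact: iota_uniq.
move=> c c'; rewrite !mem_iota => c_bd c'_bd.
by rewrite opprB addrA subrK; apply: (affine_residue_inj w_bij w_per); lia.
Qed.

Lemma gap_windowE (k : nat) (x : int) : (1 <= k < n)%N ->
  w k%:Z < x < w k.+1%:Z ->
  ~~ beadb n w x = has (fun c : nat => (n%:Z %| w c%:Z - x)%Z) (iota 1 k).
Proof.
move=> /andP[k_ge1 k_lt] /andP[wk_x x_wk1].
have [[w_bij [w_per _]] _] := w_circ.
apply/idP/hasP => [x_gap | [c]].
- have [c c_bd wc_x] := affine_residue_exists w_bij w_per x (ltnW (leq_ltn_trans k_ge1 k_lt)).
  exists c => //; rewrite mem_iota add1n ltnS (andP c_bd).1 leqNgt /=.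
  apply/negP => k_lt_c; move/negP: x_gap; apply; apply/hasP; exists c; first by rewrite mem_iota; lia.
  by rewrite wc_x andbT; have := window_le (a := k.+1) (b := c); lia.
- rewrite mem_iota => c_bd wc_x; apply/negP => /hasP[c' c'_bd /andP[x_wc' wc'_x]].
  have cc' : c' = c.
    rewrite mem_iota in c'_bd; apply: (affine_residue_inj w_bij w_per); try lia.
    by have := rpredB wc'_x wc_x; rewrite opprB addrA subrK.
  by subst c'; have := window_le (a := c) (b := k); lia.
Qed.

Lemma gapcountE (k : nat) : (1 <= k < n)%N ->
  gapcount n w k = count (in_lower_class n w k) (iota 1 `|w k.+1%:Z - w k%:Z|.-1).
Proof.
move=> k_bd; have w_incr := w_circ.2 k (andP k_bd).1 (andP k_bd).2.
rewrite /gapcount count_map; apply: eq_in_count => m; rewrite mem_iota => m_bd /=.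
rewrite (gap_windowE k_bd); last lia.
by apply: eq_has => c /=; rewrite opprD addrA.
Qed.

Lemma gapcount_decomp (k q s : nat) : (1 <= k < n)%N ->
  `|w k.+1%:Z - w k%:Z|.-1 = (q * n + s)%N ->
  gapcount n w k = (k * q + count (in_lower_class n w k) (iota 1 s))%N.
Proof.
move=> k_bd D_eq; rewrite gapcountE // D_eq.
rewrite count_iota_periodic ?count_in_lower_class 1?mulnC //; first lia.
exact: in_lower_class_periodic.
Qed.

End Window.

Lemma bias_residue_congr (n : nat) (w b : int -> int) (c k : nat) :
  bias_of n w b -> (1 <= c <= n)%N -> (1 <= k <= n)%N ->
  (n%:Z %| (w c%:Z - w k%:Z) - (b c%:Z - b k%:Z))%Z.
Proof.
move=> [_ b_congr].
have from_one (a : nat) : (1 <= a <= n)%N -> (n%:Z %| w a%:Z - b a%:Z - (w 1 - b 1))%Z.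
  elim: a => [//|a IHa] a_bd.
  have [->|a_gt0] := posnP a; first by rewrite subrr dvdz0.
  have /eqP := b_congr a a_gt0 ltac:(lia); rewrite eqz_mod_dvd => step.
  rewrite (_ : w a.+1%:Z - b a.+1%:Z - (w 1 - b 1) = (w a%:Z - b a%:Z - (w 1 - b 1))
    - (b a.+1%:Z - b a%:Z - (w a.+1%:Z - w a%:Z))); last lia.
  by rewrite rpredB ?IHa //; lia.
move=> c_bd k_bd.
rewrite (_ : w c%:Z - w k%:Z - (b c%:Z - b k%:Z) =
  (w c%:Z - b c%:Z - (w 1 - b 1)) - (w k%:Z - b k%:Z - (w 1 - b 1))); last lia.
by rewrite rpredB ?from_one.
Qed.

Lemma in_lower_class_bias (n : nat) (w b : int -> int) (k : nat) :
  bias_of n w b -> (1 <= k <= n)%N -> in_lower_class n w k =1 in_lower_class n b k.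
Proof.
move=> wb k_bd m; apply: eq_in_has => c; rewrite mem_iota => c_bd /=.
have congr_ck := bias_residue_congr wb (c := c) ltac:(lia) k_bd.
by rewrite -[w c%:Z - w k%:Z](subrK (b c%:Z - b k%:Z)) -addrA rpredDl.
Qed.

Lemma tcoord_window_diff (n : nat) (w : int -> int) (t : nat -> nat) (k : nat) :
  Sncirc n w -> is_tcoords n w t -> (1 <= k < n)%N ->
  exists2 d : int, 0 < d < n%:Z & w k.+1%:Z - w k%:Z = (t k)%:Z * n%:Z + d.
Proof.
move=> w_circ [b [wb t_gap]] k_bd; have [[b_circ b_bd] b_congr] := wb.
have /andP[k_gt0 k_lt] := k_bd.
have d_bd := b_bd k k_gt0 k_lt.
have w_incr := w_circ.2 k k_gt0 k_lt.
have /dvdzP[z wz] : (n%:Z %| (w k.+1%:Z - w k%:Z) - (b k.+1%:Z - b k%:Z))%Z.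
  by rewrite -eqz_mod_dvd b_congr.
have z_ge0 : 0 <= z by nia.
have := t_gap k k_gt0 k_lt.
rewrite (gapcount_decomp w_circ (q := absz z) (s := `|b k.+1%:Z - b k%:Z|.-1) k_bd); last lia.
rewrite (gapcount_decomp b_circ (q := 0) (s := `|b k.+1%:Z - b k%:Z|.-1) k_bd); last lia.
rewrite (eq_count (in_lower_class_bias wb _)) ?muln0 ?add0n; last lia.
move/eqP; rewrite eqn_add2r eqn_pmul2l // => /eqP z_eq.
by exists (b k.+1%:Z - b k%:Z); lia.
Qed.

Lemma tcoord_shift_lt (n : nat) (w : int -> int) (t : nat -> nat) (k j : nat) :
  Sncirc n w -> is_tcoords n w t -> (1 <= k < n)%N ->
  (w (k + j * n)%N%:Z < w k.+1%:Z) = (j <= t k)%N.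
Proof.
move=> w_circ tw k_bd; have [[_ [w_per _]] _] := w_circ.
have [d d_bd wd] := tcoord_window_diff w_circ tw k_bd.
rewrite PoszD PoszM (affine_shift w_per).
by apply/idP/idP => ?; nia.
Qed.

Lemma is_jmax_eq (n : nat) (w : int -> int) (i j q : nat) :
  (forall k : nat, (w (i + k * n)%N%:Z < w i.+1%:Z) = (k <= q)%N) ->
  is_jmax n w i j -> j = q.
Proof.
move=> lt_next [[-> none] | [_ [j_lt above]]].
  by have [//|q_gt0] := posnP q; case: (none q q_gt0); rewrite lt_next.
rewrite lt_next in j_lt; apply/eqP; rewrite eqn_leq j_lt leqNgt.
by apply/negP => j_lt_q; apply: (above q j_lt_q); rewrite lt_next.
Qed.

Lemma boundaries_id (n i q : nat) : (1 <= i < n)%N -> boundaries n i q = q.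
Proof.
move=> i_bd; rewrite /boundaries.
rewrite (eq_count (a2 := fun r => 0 < r <= q)%N); last first.
  by move=> r /=; apply/idP/idP; nia.
rewrite (_ : (i + q * n)%N = 1 + (q + (i + q * n - q.+1)))%N; last nia.
rewrite !iotaD !count_cat /= add0n.
rewrite (eq_in_count (a2 := predT)) ?count_predT ?size_iota; last first.
  by move=> r; rewrite mem_iota => /= ?; lia.
rewrite (eq_in_count (a2 := pred0)) ?count_pred0 ?addn0 //.
by move=> r; rewrite mem_iota => /= ?; apply/negbTE; lia.
Qed.

Theorem mainTheorem6 (n : nat) (w : int -> int) (t : nat -> nat) (i j : nat) :
  (2 <= n)%N -> Sncirc n w -> is_tcoords n w t ->
  (1 <= i)%N -> (i <= n.-1)%N -> is_jmax n w i j ->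
  t i = boundaries n i j.
Proof.
move=> _ w_circ tw i_ge1 i_le jmax.
have i_bd : (1 <= i < n)%N by lia.
rewrite boundaries_id //; apply/esym/(is_jmax_eq _ jmax) => k.
exact: tcoord_shift_lt.
Qed.
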